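(* Let $A$ be an $M\times N$ matrix whose columns form a frame for $\mathcal{H}_M$ and let $c$ be a nonzero scalar. Then the columns of the $2M\times 2N$ matrix $$B=\begin{bmatrix}cA & cA\\ cA & -cA\end{bmatrix}$$ form a frame for $\mathcal{H}_{2M}$. Moreover, $B$ represents a tight frame if $A$ does, and $B$ represents an equal norm frame if $A$ does.
   Context: $\mathcal{H}_M$ denotes an $M$-dimensional Hilbert space, identified with $\mathbb{R}^M$ (or $\mathbb{C}^M$) via a fixed orthonormal basis. A family $\{f_i\}_{i=1}^N$ is a frame if there are $0<A\le B<\infty$ with $A\|f\|^2\le\sum_i|\langle f,f_i\rangle|^2\le B\|f\|^2$ for all $f$; tight if one can take $A=B$; equal norm if all $\|f_i\|$ are equal. A matrix represents a frame if its columns form one. *)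

From HB Require Import structures.
From mathcomp Require Import all_boot all_order all_algebra.
Set Implicit Arguments. Unset Strict Implicit. Unset Printing Implicit Defensive.
Import Order.TTheory GRing.Theory Num.Theory.
Local Open Scope ring_scope.

(* H_M is identified with R^M (real case, cj = id) or C^M (complex case,
   cj = complex conjugation) via a fixed orthonormal basis. *)

Definition ip (R : numDomainType) (cj : R -> R) (M : nat) (f g : 'cV[R]_M) : R :=
  \sum_(j < M) f j 0 * cj (g j 0).

Definition normsq (R : numDomainType) (M : nat) (f : 'cV[R]_M) : R :=
  \sum_(j < M) `|f j 0| ^+ 2.

Definition frame_sum (R : numDomainType) (cj : R -> R) (M N : nat)
  (F : 'M[R]_(M, N)) (f : 'cV[R]_M) : R :=
  \sum_(i < N) `|ip cj f (col i F)| ^+ 2.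

Definition is_frame (R : numDomainType) (cj : R -> R) (M N : nat)
  (F : 'M[R]_(M, N)) : Prop :=
  exists A B : R, 0 < A /\ A <= B /\
    forall f : 'cV[R]_M,
      A * normsq f <= frame_sum cj F f /\ frame_sum cj F f <= B * normsq f.

Definition is_tight_frame (R : numDomainType) (cj : R -> R) (M N : nat)
  (F : 'M[R]_(M, N)) : Prop :=
  exists A : R, 0 < A /\
    forall f : 'cV[R]_M,
      A * normsq f <= frame_sum cj F f /\ frame_sum cj F f <= A * normsq f.

Definition is_equal_norm_frame (R : numDomainType) (cj : R -> R) (M N : nat)
  (F : 'M[R]_(M, N)) : Prop :=
  is_frame cj F /\ forall i j : 'I_N, normsq (col i F) = normsq (col j F).

Definition dbl_mx (R : numDomainType) (M N : nat) (c : R) (A : 'M[R]_(M, N))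
  : 'M[R]_(M + M, N + N) :=
  block_mx (c *: A) (c *: A) (c *: A) (- (c *: A)).

Definition prop33 (R : numDomainType) (cj : R -> R) : Prop :=
  forall (M N : nat) (A : 'M[R]_(M, N)) (c : R),
    is_frame cj A -> c != 0 ->
    is_frame cj (dbl_mx c A)
    /\ (is_tight_frame cj A -> is_tight_frame cj (dbl_mx c A))
    /\ (is_equal_norm_frame cj A -> is_equal_norm_frame cj (dbl_mx c A)).

From HB Require Import structures.
From mathcomp Require Import all_boot all_order all_algebra.
From mathcomp Require Import ring.
Import Order.TTheory GRing.Theory Num.Theory.
Local Open Scope ring_scope.

(* Split f in H_(2M) as f = (u; v).  The inner products of f with the columns
   of B are c^* <u + v, a_i> and c^* <u - v, a_i>, so the frame sum of B at f is
   |c|^2 times the frame sums of A at u + v and at u - v.  By the parallelogram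
   law ||u + v||^2 + ||u - v||^2 = 2 ||f||^2, hence any frame bounds (A0, B0) of
   A become frame bounds (2|c|^2 A0, 2|c|^2 B0) of B; and every column of B has
   squared norm 2|c|^2 times that of a column of A. *)

Definition frame_bounds {R : numDomainType} (cj : R -> R) {M N : nat}
  (F : 'M[R]_(M, N)) (a b : R) : Prop :=
  forall f : 'cV[R]_M, a * normsq f <= frame_sum cj F f /\ frame_sum cj F f <= b * normsq f.

Section DoubledFrame.

Variables (R : numDomainType) (cj : R -> R).
Hypothesis cjD : forall x y, cj (x + y) = cj x + cj y.
Hypothesis cjM : forall x y, cj (x * y) = cj x * cj y.
Hypothesis cjK : involutive cj.
Hypothesis sqr_norm_cj : forall x, `|x| ^+ 2 = x * cj x.

Lemma cjN x : cj (- x) = - cj x.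
Proof.
have cj0 : cj 0 = 0 by apply: (addrI (cj 0)); rewrite -cjD !addr0.
by apply: (addrI (cj x)); rewrite -cjD !subrr.
Qed.

Lemma sqr_norm_cjE x : `|cj x| ^+ 2 = `|x| ^+ 2.
Proof. by rewrite !sqr_norm_cj cjK mulrC. Qed.

Variables (M N : nat) (A : 'M[R]_(M, N)) (c : R).

Lemma ip_dbl_mx_lshift (u v : 'cV_M) i :
  ip cj (col_mx u v) (col (lshift N i) (dbl_mx c A)) = cj c * ip cj (u + v) (col i A).
Proof.
rewrite /ip big_split_ord /= mulr_sumr -big_split /=; apply: eq_bigr => j _.
by rewrite !mxE !(unsplitK (inl _), unsplitK (inr _)) /= !mxE
  !(unsplitK (inl _), unsplitK (inr _)) /= !mxE !cjM; ring.
Qed.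

Lemma ip_dbl_mx_rshift (u v : 'cV_M) i :
  ip cj (col_mx u v) (col (rshift N i) (dbl_mx c A)) = cj c * ip cj (u - v) (col i A).
Proof.
rewrite /ip big_split_ord /= mulr_sumr -big_split /=; apply: eq_bigr => j _.
by rewrite !mxE !(unsplitK (inl _), unsplitK (inr _)) /= !mxE
  !(unsplitK (inl _), unsplitK (inr _)) /= !mxE cjN !cjM; ring.
Qed.

Lemma frame_sum_dbl_mx (u v : 'cV_M) :
  frame_sum cj (dbl_mx c A) (col_mx u v) =
  `|c| ^+ 2 * (frame_sum cj A (u + v) + frame_sum cj A (u - v)).
Proof.
rewrite /frame_sum big_split_ord /= mulrDr !mulr_sumr.
by congr (_ + _); apply: eq_bigr => i _;
  rewrite (ip_dbl_mx_lshift, ip_dbl_mx_rshift) normrM exprMn sqr_norm_cjE.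
Qed.

Lemma normsq_col_mx (u v : 'cV[R]_M) : normsq (col_mx u v) = normsq u + normsq v.
Proof.
rewrite /normsq big_split_ord /=.
by congr (_ + _); apply: eq_bigr => j _; rewrite (col_mxEu, col_mxEd).
Qed.

Lemma normsq_parallelogram (u v : 'cV[R]_M) :
  normsq (u + v) + normsq (u - v) = 2 * (normsq u + normsq v).
Proof.
rewrite /normsq -big_split mulrDr !mulr_sumr -big_split /=; apply: eq_bigr => j _.
by rewrite !mxE !sqr_norm_cj !cjD !cjN; ring.
Qed.

Lemma normsq_col_dbl_mx k : exists i,
  normsq (col k (dbl_mx c A)) = 2 * `|c| ^+ 2 * normsq (col i A).
Proof.
rewrite -(splitK k); case: (split k) => i; exists i => /=;
rewrite /normsq big_split_ord /= mulr_sumr -big_split /=; apply: eq_bigr => j _;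
rewrite !mxE !(unsplitK (inl _), unsplitK (inr _)) /= !mxE
  !(unsplitK (inl _), unsplitK (inr _)) /= ?mxE ?normrN normrM exprMn; ring.
Qed.

Lemma frame_bounds_dbl_mx a b : frame_bounds cj A a b ->
  frame_bounds cj (dbl_mx c A) (2 * `|c| ^+ 2 * a) (2 * `|c| ^+ 2 * b).
Proof.
move=> Aab f; rewrite -[f]vsubmxK frame_sum_dbl_mx normsq_col_mx.
set u := usubmx f; set v := dsubmx f.
have [lo_plus hi_plus] := Aab (u + v); have [lo_minus hi_minus] := Aab (u - v).
have scaleE x : 2 * `|c| ^+ 2 * x * (normsq u + normsq v) =
    `|c| ^+ 2 * (x * normsq (u + v) + x * normsq (u - v)).
  by rewrite -mulrDr normsq_parallelogram; ring.
by rewrite !scaleE; split; apply: ler_wpM2l; rewrite ?exprn_ge0 // lerD.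
Qed.

Hypothesis c_neq0 : c != 0.

Lemma dbl_mx_scale_gt0 : 0 < 2 * `|c| ^+ 2.
Proof. by rewrite mulr_gt0 // exprn_gt0 // normr_gt0. Qed.

Lemma dbl_mx_frame : is_frame cj A -> is_frame cj (dbl_mx c A).
Proof.
move=> [a [b [a_gt0 [le_ab Aab]]]].
exists (2 * `|c| ^+ 2 * a), (2 * `|c| ^+ 2 * b).
split; first by rewrite mulr_gt0 // dbl_mx_scale_gt0.
by rewrite ler_pM2l ?dbl_mx_scale_gt0 //; split=> //; apply: frame_bounds_dbl_mx.
Qed.

Lemma dbl_mx_tight_frame : is_tight_frame cj A -> is_tight_frame cj (dbl_mx c A).
Proof.
move=> [a [a_gt0 Aaa]]; exists (2 * `|c| ^+ 2 * a).
by split; [rewrite mulr_gt0 // dbl_mx_scale_gt0 | apply: frame_bounds_dbl_mx].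
Qed.

Lemma dbl_mx_equal_norm_frame :
  is_equal_norm_frame cj A -> is_equal_norm_frame cj (dbl_mx c A).
Proof.
move=> [A_frame eq_norm]; split=> [|k l]; first exact: dbl_mx_frame.
have [i ->] := normsq_col_dbl_mx k; have [j ->] := normsq_col_dbl_mx l.
by rewrite (eq_norm i j).
Qed.

End DoubledFrame.

Lemma prop33_conj (R : numDomainType) (cj : R -> R) :
  (forall x y, cj (x + y) = cj x + cj y) -> (forall x y, cj (x * y) = cj x * cj y) ->
  involutive cj -> (forall x, `|x| ^+ 2 = x * cj x) -> prop33 cj.
Proof.
move=> cjD cjM cjK sqr_norm_cj M N A c A_frame c_neq0.
split; first exact: dbl_mx_frame.
by split; [apply: dbl_mx_tight_frame | apply: dbl_mx_equal_norm_frame].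
Qed.

Theorem proposition3p3 :
  (forall R : realFieldType, prop33 (R := R) id)
  /\ (forall C : numClosedFieldType, prop33 (R := C) (fun z => z^*)).
Proof.
split=> [R | C].
  by apply: prop33_conj => // x; rewrite real_normK ?num_real.
apply: prop33_conj => [x y | x y | x | x] /=.
- exact: rmorphD.
- exact: rmorphM.
- exact: conjCK.
- exact: normCK.
Qed.
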